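(* Let $\underline\phi\le\overline\phi$ and $\underline\chi\le\overline\chi$ be functions $[0,1]\to[0,1]$ such that the pairs involved satisfy (F1)–(F3), and let \[\mathcal C^{\mathrm{MM}}=\{C^{\mathrm{MM}}_{\phi,\chi}:\ \underline\phi\le\phi\le\overline\phi,\ \underline\chi\le\chi\le\overline\chi,\ \phi,\chi \text{ satisfy (F1)–(F3)}\}.\] Then $\mathcal C^{\mathrm{MM}}$ has pointwise minimal element $C^{\mathrm{MM}}_{\underline\phi,\overline\chi}$ and maximal element $C^{\mathrm{MM}}_{\overline\phi,\underline\chi}$, i.e. $C^{\mathrm{MM}}_{\underline\phi,\overline\chi}(u,v)\le C^{\mathrm{MM}}_{\phi,\chi}(u,v)\le C^{\mathrm{MM}}_{\overline\phi,\underline\chi}(u,v)$ for every $C^{\mathrm{MM}}_{\phi,\chi}\in\mathcal C^{\mathrm{MM}}$ and $u,v\in[0,1]$.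
   Context: Conditions on $\phi,\chi:[0,1]\to[0,1]$: (F1) $\phi(0)=\chi(0)=0$, $\phi(1)=\chi(1)=1$; (F2) $\phi,\chi$ non-decreasing; (F3) $\phi(u)/u$ on $(0,1]$ and $\chi_*(w)=\frac{1-\chi(w)}{w-\chi(w)}$ on $[0,1]$ (values in $[1,\infty]$) are non-increasing. Maxmin copula: $C^{\mathrm{MM}}_{\phi,\chi}(u,w)=uw+\min\{u(1-w),(\phi(u)-u)(w-\chi(w))\}$. *)

From mathcomp Require Import all_boot all_order all_algebra.
From mathcomp Require Import reals constructive_ereal.
Set Implicit Arguments. Unset Strict Implicit. Unset Printing Implicit Defensive.
Import Order.TTheory GRing.Theory Num.Theory.
Local Open Scope ring_scope.

Section MaxMin.
Variable R : realType.

Definition maps01 (f : R -> R) : Prop :=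
  forall x, 0 <= x -> x <= 1 -> 0 <= f x /\ f x <= 1.

Definition F1 (f : R -> R) : Prop := f 0 = 0 /\ f 1 = 1.

Definition F2 (f : R -> R) : Prop :=
  forall x y, 0 <= x -> x <= y -> y <= 1 -> f x <= f y.

Definition F3_phi (phi : R -> R) : Prop :=
  forall x y, 0 < x -> x <= y -> y <= 1 -> phi y / y <= phi x / x.

Definition chi_star (chi : R -> R) (w : R) : \bar R :=
  if w - chi w == 0 then +oo%E else ((1 - chi w) / (w - chi w))%:E.

(* At w = 1 the expression is 0/0; any value in [1,+oo] there (e.g. the
   convention chi_*(1) = 1) makes the condition at w = 1 automatic, so the
   condition is imposed on [0,1). *)
Definition F3_chi (chi : R -> R) : Prop :=
  (forall w, 0 <= w -> w < 1 -> (1%:E <= chi_star chi w)%E) /\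
  (forall x y, 0 <= x -> x <= y -> y < 1 -> (chi_star chi y <= chi_star chi x)%E).

Definition admissible_phi (phi : R -> R) : Prop :=
  [/\ maps01 phi, F1 phi, F2 phi & F3_phi phi].

Definition admissible_chi (chi : R -> R) : Prop :=
  [/\ maps01 chi, F1 chi, F2 chi & F3_chi chi].

Definition C_MM (phi chi : R -> R) (u w : R) : R :=
  u * w + Num.min (u * (1 - w)) ((phi u - u) * (w - chi w)).

Definition le01 (f g : R -> R) : Prop :=
  forall x, 0 <= x -> x <= 1 -> f x <= g x.

End MaxMin.

From mathcomp Require Import all_boot all_order all_algebra.
From mathcomp Require Import reals constructive_ereal.
Import Order.TTheory GRing.Theory Num.Theory.
Local Open Scope ring_scope.

(* (F1) and (F3) give [u <= phi u] and [chi w <= w] on [0,1].  Hence the second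
   argument [(phi u - u) * (w - chi w)] of the minimum in [C_MM] is a product of
   nonnegative factors, increasing in [phi] and decreasing in [chi], while the
   first argument does not involve [phi] or [chi] at all. *)

Section Bounds.
Variable R : realType.

Lemma F3_phi_ge_id (phi : R -> R) (u : R) :
  F1 phi -> F3_phi phi -> 0 <= u -> u <= 1 -> u <= phi u.
Proof.
move=> [phi0 phi1] phi_dec u_ge0 u_le1.
have [->|u_neq0] := eqVneq u 0; first by rewrite phi0.
have u_gt0 : 0 < u by rewrite lt_neqAle eq_sym u_neq0.
have := phi_dec u 1 u_gt0 u_le1 (lexx _).
by rewrite phi1 divr1 ler_pdivlMr // mul1r.
Qed.

Lemma F3_chi_le_id (chi : R -> R) (w : R) :
  F1 chi -> F3_chi chi -> 0 <= w -> w <= 1 -> chi w <= w.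
Proof.
move=> [_ chi1] [chi_star_ge1 _] w_ge0 w_le1.
have [->|w_neq1] := eqVneq w 1; first by rewrite chi1.
have w_lt1 : w < 1 by rewrite lt_neqAle w_neq1 w_le1.
rewrite leNgt; apply/negP => w_lt_chi.
have den_lt0 : w - chi w < 0 by rewrite subr_lt0.
move: (chi_star_ge1 w w_ge0 w_lt1); rewrite /chi_star lt_eqF //.
rewrite lee_fin ler_ndivlMr // mul1r lerD2r.
by rewrite leNgt w_lt1.
Qed.

Lemma C_MM_le (phi1 phi2 chi1 chi2 : R -> R) (u w : R) :
  u <= phi1 u -> phi1 u <= phi2 u -> chi2 w <= w -> chi1 w <= chi2 w ->
  C_MM phi1 chi2 u w <= C_MM phi2 chi1 u w.
Proof.
move=> phi1_ge phi12 chi2_le chi12.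
rewrite /C_MM lerD2l le_min2 // ler_pM ?subr_ge0 ?lerD2r ?lerD2l ?lerN2 //.
Qed.

End Bounds.

Theorem proposition7 (R : realType) (phil phiu chil chiu : R -> R) :
  admissible_phi phil -> admissible_phi phiu ->
  admissible_chi chil -> admissible_chi chiu ->
  le01 phil phiu -> le01 chil chiu ->
  forall (phi chi : R -> R),
    admissible_phi phi -> admissible_chi chi ->
    le01 phil phi -> le01 phi phiu ->
    le01 chil chi -> le01 chi chiu ->
    forall u v : R, 0 <= u -> u <= 1 -> 0 <= v -> v <= 1 ->
      C_MM phil chiu u v <= C_MM phi chi u v /\
      C_MM phi chi u v <= C_MM phiu chil u v.
Proof.
move=> [_ phil1 _ phil3] _ _ [_ chiu1 _ chiu3] _ _ phi chi
  [_ phi1 _ phi3] [_ chi1 _ chi3] phil_le phi_le chil_le chi_le u v u0 u1 v0 v1.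
split; apply: C_MM_le.
- exact: F3_phi_ge_id.
- exact: phil_le.
- exact: F3_chi_le_id.
- exact: chi_le.
- exact: F3_phi_ge_id.
- exact: phi_le.
- exact: F3_chi_le_id.
- exact: chil_le.
Qed.
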